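(* Let $0<a<1$, $0<p<1$, let $x^\ast>0$ be the solution of $P(a,x)=p$, and let $x_0$ be any number with $0<x_0\le x^\ast$ (for instance $x_0=(p\,\Gamma(a+1))^{1/a}$). Define the Newton iterates $$x_{n+1}=x_n-\frac{P(a,x_n)-p}{\partial_x P(a,x_n)},\qquad n\ge0.$$ Then $(x_n)$ is nondecreasing, satisfies $x_n\le x^\ast$ for all $n$, and converges to $x^\ast$.
   Context: $P(a,x)=\frac{1}{\Gamma(a)}\int_0^x t^{a-1}e^{-t}\,dt$ for $a>0$, $x>0$, so $\partial_xP(a,x)=x^{a-1}e^{-x}/\Gamma(a)$. *)

From Stdlib Require Import Reals Lra ClassicalEpsilon.
Open Scope R_scope.

Definition gamma_integrand (a t : R) : R := Rpower t (a - 1) * exp (- t).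

(* [l] is the (improper at 0) integral  int_0^x f(t) dt :
   l = lim_{e -> 0+} int_e^x f(t) dt  (Riemann integrals on [e,x]). *)
Definition improper_int_0 (f : R -> R) (x l : R) : Prop :=
  forall eps, 0 < eps -> exists delta, 0 < delta /\
    forall e, 0 < e -> e < delta -> e < x ->
      exists pr : Riemann_integrable f e x, Rabs (RiemannInt pr - l) < eps.

Definition lower_gamma (a x : R) : R :=
  epsilon (inhabits 0) (fun l => improper_int_0 (gamma_integrand a) x l).

Definition Gamma_fn (a : R) : R :=
  epsilon (inhabits 0) (fun g => forall eps, 0 < eps -> exists M,
     forall X, M <= X -> Rabs (lower_gamma a X - g) < eps).

Definition P (a x : R) : R := lower_gamma a x / Gamma_fn a.

(* d/dx P(a,x) = x^(a-1) e^(-x) / Gamma(a) *)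
Definition dP (a x : R) : R := Rpower x (a - 1) * exp (- x) / Gamma_fn a.

Fixpoint newton (a p x0 : R) (n : nat) : R :=
  match n with
  | O => x0
  | S m => let x := newton a p x0 m in x - (P a x - p) / dP a x
  end.

From Stdlib Require Import Reals Lra ClassicalEpsilon Classical.
From Coquelicot Require Import Coquelicot.
Open Scope R_scope.

(* The argument has two independent halves.
   1. An abstract Newton lemma: if G has, on [x0, xs], a positive and
      nonincreasing slope function g in the integral-sandwich sense
         g(xs) (xs - x) <= G(xs) - G(x) <= g(x) (xs - x),
      then the Newton map x |-> x - (G x - G xs)/g x sends [x0, xs] into
      itself, moves to the right, and contracts the distance to xs by the
      factor 1 - g(xs)/g(x0) < 1.  Hence the iterates increase and converge
      geometrically to xs.
   2. The sandwich for G = P(a, .), g = dP(a, .): the integrand t^(a-1) e^-t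
      is positive, continuous and (as a < 1) nonincreasing on (0, oo); the
      improper integral lower_gamma is identified with a supremum plus a
      Riemann integral, so its increments are Riemann integrals of the
      integrand, which are bounded by its values at the endpoints. *)

Lemma Un_cv_geometric_below (u : nat -> R) (l r C : R) :
  0 <= r < 1 -> (forall n, 0 <= l - u n <= r ^ n * C) -> Un_cv u l.
Proof.
  intros hr hu. apply is_lim_seq_Reals.
  apply is_lim_seq_le_le with (u := fun n => l - r ^ n * C) (w := fun _ => l).
  - intros n. specialize (hu n). lra.
  - replace (Finite l) with (Finite (l - 0 * C)) by (f_equal; ring).
    apply is_lim_seq_minus'; [apply is_lim_seq_const |].
    apply (is_lim_seq_scal_r (fun n => r ^ n) C 0).
    apply is_lim_seq_geom. rewrite Rabs_right; lra.
  - apply is_lim_seq_const.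
Qed.

Lemma RInt_nonincreasing_bounds (f : R -> R) (u v : R) :
  u <= v -> ex_RInt f u v ->
  (forall x y, u <= x -> x <= y -> y <= v -> f y <= f x) ->
  f v * (v - u) <= RInt f u v <= f u * (v - u).
Proof.
  intros huv hf hdec.
  assert (Hc : forall c, RInt (fun _ => c) u v = c * (v - u)).
  { intros c. rewrite RInt_const. unfold scal; simpl; unfold mult; simpl. ring. }
  rewrite <- !Hc. split; apply RInt_le; auto using ex_RInt_const;
    intros x Hx; apply hdec; lra.
Qed.

Section AbstractNewton.

(* G is the function to invert, g its derivative, xs the target root. *)
Variables (G g : R -> R) (x0 xs : R).
Hypothesis x0_le_xs : x0 <= xs.
Hypothesis g_pos : forall x, x0 <= x <= xs -> 0 < g x.
Hypothesis g_nonincreasing : forall x y, x0 <= x -> x <= y -> y <= xs -> g y <= g x.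
Hypothesis G_sandwich : forall x, x0 <= x <= xs ->
  g xs * (xs - x) <= G xs - G x <= g x * (xs - x).

Definition newton_step (x : R) : R := x - (G x - G xs) / g x.

(* Factor by which one step shrinks the distance to xs: one minus the ratio
   of the slopes at the two ends of the bracket. *)
Definition contraction : R := 1 - g xs / g x0.

Lemma contraction_range : 0 <= contraction < 1.
Proof.
  unfold contraction.
  assert (0 < g xs) by (apply g_pos; lra).
  assert (0 < g x0) by (apply g_pos; lra).
  assert (g xs <= g x0) by (apply g_nonincreasing; lra).
  assert (0 < g xs / g x0) by (apply Rdiv_lt_0_compat; auto).
  assert (g xs / g x0 <= 1).
  { apply Rmult_le_reg_r with (g x0); [auto |].
    replace (g xs / g x0 * g x0) with (g xs) by (field; lra). lra. }
  lra.
Qed.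

Lemma newton_step_bracket (x : R) : x0 <= x <= xs ->
  x <= newton_step x <= xs /\ xs - newton_step x <= contraction * (xs - x).
Proof.
  intros Hx. unfold newton_step, contraction.
  assert (hgx : 0 < g x) by (apply g_pos; lra).
  assert (hg0 : 0 < g x0) by (apply g_pos; lra).
  assert (hgs : 0 < g xs) by (apply g_pos; lra).
  assert (hgx0 : g x <= g x0) by (apply g_nonincreasing; lra).
  destruct (G_sandwich x Hx) as [B1 B2].
  set (q := (G xs - G x) / g x).
  assert (hstep : x - (G x - G xs) / g x = x + q) by (unfold q; field; lra).
  assert (hq : q * g x = G xs - G x) by (unfold q; field; lra).
  rewrite hstep.
  assert (q <= xs - x) by nra.
  assert (0 <= q) by nra.
  assert (q * g x <= q * g x0) by (apply Rmult_le_compat_l; lra).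
  assert (Hlin : g xs / g x0 * (xs - x) <= q).
  { apply Rmult_le_reg_r with (g x0); [exact hg0 |].
    replace (g xs / g x0 * (xs - x) * g x0) with (g xs * (xs - x)) by (field; lra).
    lra. }
  split; lra.
Qed.

Variable u : nat -> R.
Hypothesis u_0 : u 0%nat = x0.
Hypothesis u_S : forall n, u (S n) = newton_step (u n).

Lemma newton_iterates_bracket (n : nat) :
  x0 <= u n <= xs /\ xs - u n <= contraction ^ n * (xs - x0).
Proof.
  pose proof contraction_range as Hc.
  induction n as [|n [H1 H2]].
  - rewrite u_0. simpl. lra.
  - destruct (newton_step_bracket _ H1) as [S1 S2].
    rewrite u_S. simpl pow. split; [lra | nra].
Qed.

Lemma newton_iterates_nondecreasing (n : nat) : u n <= u (S n).
Proof.
  destruct (newton_iterates_bracket n) as [H1 _].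
  rewrite u_S. apply (newton_step_bracket _ H1).
Qed.

Lemma newton_iterates_converge : Un_cv u xs.
Proof.
  apply Un_cv_geometric_below with contraction (xs - x0).
  - exact contraction_range.
  - intros n. destruct (newton_iterates_bracket n) as [[_ H1] H2]. lra.
Qed.

End AbstractNewton.

Lemma exp_nondecreasing (x y : R) : x <= y -> exp x <= exp y.
Proof. intros [H | ->]; [left; apply exp_increasing; exact H | lra]. Qed.

Lemma gamma_integrand_pos (a t : R) : 0 < gamma_integrand a t.
Proof. unfold gamma_integrand, Rpower. apply Rmult_lt_0_compat; apply exp_pos. Qed.

Lemma gamma_integrand_continuous (a t : R) : 0 < t -> continuous (gamma_integrand a) t.
Proof.
  intros Ht. apply continuity_pt_filterlim. unfold gamma_integrand.
  change (continuity_pt (mult_fct (fun t => Rpower t (a-1)) (comp exp Ropp)) t).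
  apply continuity_pt_mult.
  - apply derivable_continuous_pt. exists ((a-1) * Rpower t (a-1-1)).
    apply derivable_pt_lim_power; exact Ht.
  - apply continuity_pt_comp.
    + apply continuity_pt_opp, continuity_pt_id.
    + apply derivable_continuous_pt, derivable_pt_exp.
Qed.

(* For a <= 1 both factors t^(a-1) and e^(-t) are nonincreasing. *)
Lemma gamma_integrand_nonincreasing (a u v : R) :
  a <= 1 -> 0 < u -> u <= v -> gamma_integrand a v <= gamma_integrand a u.
Proof.
  intros ha hu huv. unfold gamma_integrand, Rpower.
  assert (ln u <= ln v) by (apply ln_le; lra).
  apply Rmult_le_compat; try (left; apply exp_pos); apply exp_nondecreasing; nra.
Qed.

Lemma gamma_integrand_integrable (a u v : R) :
  0 < u -> 0 < v -> ex_RInt (gamma_integrand a) u v.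
Proof.
  intros hu hv. apply (@ex_RInt_continuous R_CompleteNormedModule).
  intros z Hz. apply gamma_integrand_continuous.
  assert (0 < Rmin u v) by (apply Rmin_pos; lra). lra.
Qed.

Lemma gamma_integrand_chasles (a u v w : R) : 0 < u -> 0 < v -> 0 < w ->
  RInt (gamma_integrand a) u v + RInt (gamma_integrand a) v w
  = RInt (gamma_integrand a) u w.
Proof.
  intros. rewrite <- (RInt_Chasles (gamma_integrand a) u v w);
    try apply gamma_integrand_integrable; auto.
Qed.

(* Near 0 the integrand is dominated by t^(a-1), whose integral over [e, 1]
   is (1 - e^a)/a < 1/a: the truncated integrals are bounded. *)
Lemma gamma_integrand_head_bound (a e : R) : 0 < a -> 0 < e -> e < 1 ->
  RInt (gamma_integrand a) e 1 <= / a.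
Proof.
  intros ha he he1.
  assert (Hpow : is_RInt (fun t => Rpower t (a-1)) e 1
                   (minus (/a * Rpower 1 a) (/a * Rpower e a))).
  { apply (is_RInt_derive (fun t => /a * Rpower t a)); intros x Hx;
      assert (0 < x) by (rewrite Rmin_left in Hx; lra).
    - replace (Rpower x (a-1)) with (/a * (a * Rpower x (a-1))) by (field; lra).
      apply is_derive_scal, is_derive_Reals, derivable_pt_lim_power; auto.
    - apply continuity_pt_filterlim, derivable_continuous_pt.
      exists ((a-1) * Rpower x (a-1-1)). apply derivable_pt_lim_power; auto. }
  apply Rle_trans with (RInt (fun t => Rpower t (a-1)) e 1).
  - apply RInt_le; try lra.
    + apply gamma_integrand_integrable; lra.
    + eexists; exact Hpow.
    + intros x Hx. unfold gamma_integrand.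
      assert (exp (-x) <= 1) by (rewrite <- exp_0; apply exp_nondecreasing; lra).
      assert (0 < Rpower x (a-1)) by apply exp_pos. nra.
  - rewrite (is_RInt_unique _ _ _ _ Hpow). unfold minus, plus, opp; simpl.
    assert (Rpower 1 a = 1) by (unfold Rpower; rewrite ln_1, Rmult_0_r, exp_0; auto).
    assert (0 < Rpower e a) by apply exp_pos.
    assert (0 < / a) by (apply Rinv_0_lt_compat; lra). nra.
Qed.

Lemma improper_int_0_unique (f : R -> R) (x l1 l2 : R) : 0 < x ->
  improper_int_0 f x l1 -> improper_int_0 f x l2 -> l1 = l2.
Proof.
  intros hx H1 H2.
  apply NNPP. intros Hne.
  set (eps := Rabs (l1 - l2) / 2).
  assert (he : 0 < eps).
  { unfold eps. assert (0 < Rabs (l1 - l2)) by (apply Rabs_pos_lt; lra). lra. }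
  destruct (H1 eps he) as [d1 [hd1 K1]]. destruct (H2 eps he) as [d2 [hd2 K2]].
  set (e := Rmin (Rmin d1 d2) x / 2).
  assert (Hm : 0 < Rmin (Rmin d1 d2) x) by (repeat apply Rmin_pos; lra).
  assert (e < d1 /\ e < d2 /\ e < x) as [Hd1 [Hd2 Hdx]].
  { pose proof (Rmin_l (Rmin d1 d2) x). pose proof (Rmin_r (Rmin d1 d2) x).
    pose proof (Rmin_l d1 d2). pose proof (Rmin_r d1 d2). unfold e. lra. }
  destruct (K1 e ltac:(unfold e; lra) Hd1 Hdx) as [pr1 A1].
  destruct (K2 e ltac:(unfold e; lra) Hd2 Hdx) as [pr2 A2].
  rewrite (RiemannInt_P5 pr1 pr2) in A1.
  pose proof (Rabs_triang (l1 - RiemannInt pr2) (RiemannInt pr2 - l2)).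
  replace (l1 - RiemannInt pr2 + (RiemannInt pr2 - l2)) with (l1 - l2) in H by ring.
  rewrite Rabs_minus_sym in A1. unfold eps in *. lra.
Qed.

(* The integral of the integrand over (0, 1]: the supremum of the
   increasing family of truncated integrals over [e, 1], 0 < e < 1. *)
Definition head_integrals (a y : R) : Prop :=
  exists e, 0 < e < 1 /\ y = RInt (gamma_integrand a) e 1.

Definition head_integral (a : R) : R :=
  epsilon (inhabits 0) (fun m => is_lub (head_integrals a) m).

Lemma head_integral_lub (a : R) : 0 < a -> is_lub (head_integrals a) (head_integral a).
Proof.
  intros ha. unfold head_integral. apply epsilon_spec.
  destruct (completeness (head_integrals a)) as [m Hm].
  - exists (/a). intros y [e [He ->]]. apply gamma_integrand_head_bound; lra.
  - exists (RInt (gamma_integrand a) (1/2) 1). exists (1/2). split; [lra | auto].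
  - exists m; exact Hm.
Qed.

Lemma lower_gamma_split (a x : R) : 0 < a -> 0 < x ->
  lower_gamma a x = head_integral a + RInt (gamma_integrand a) 1 x.
Proof.
  intros ha hx.
  assert (Himp : improper_int_0 (gamma_integrand a) x
                   (head_integral a + RInt (gamma_integrand a) 1 x)).
  { intros eps heps. destruct (head_integral_lub a ha) as [Hub Hlub].
    assert (Hclose : exists e0, 0 < e0 < 1 /\
              head_integral a - eps < RInt (gamma_integrand a) e0 1).
    { apply NNPP. intros Hn.
      assert (head_integral a <= head_integral a - eps) by
        (apply Hlub; intros y [e0 [He0 ->]];
         apply Rnot_lt_le; intros Hy; apply Hn; exists e0; auto).
      lra. }
    destruct Hclose as [e0 [He0 Hy]].
    exists e0. split; [lra |]. intros e he hee0 hex.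
    exists (ex_RInt_Reals_0 _ _ _ (gamma_integrand_integrable a e x he hx)).
    rewrite <- RInt_Reals, <- (gamma_integrand_chasles a e 1 x) by lra.
    assert (RInt (gamma_integrand a) e 1 <= head_integral a)
      by (apply Hub; exists e; split; [lra | auto]).
    assert (0 <= RInt (gamma_integrand a) e e0).
    { apply RInt_ge_0; try lra.
      - apply gamma_integrand_integrable; lra.
      - intros; left; apply gamma_integrand_pos. }
    rewrite <- (gamma_integrand_chasles a e e0 1) in * by lra.
    apply Rabs_def1; lra. }
  apply (improper_int_0_unique (gamma_integrand a) x); auto.
  unfold lower_gamma. apply epsilon_spec. eexists; exact Himp.
Qed.

Lemma lower_gamma_increment (a u v : R) : 0 < a -> 0 < u -> 0 < v ->
  lower_gamma a v - lower_gamma a u = RInt (gamma_integrand a) u v.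
Proof.
  intros. rewrite !lower_gamma_split by auto.
  rewrite <- (gamma_integrand_chasles a 1 u v) by lra. ring.
Qed.

Lemma lower_gamma_pos (a x : R) : 0 < a -> 0 < x -> 0 < lower_gamma a x.
Proof.
  intros ha hx. rewrite lower_gamma_split by auto.
  set (e := Rmin (x/2) (1/2)).
  assert (0 < e /\ e <= x/2 /\ e <= 1/2) as [He [Hex He1]]
    by (unfold e; repeat split; [apply Rmin_pos | apply Rmin_l | apply Rmin_r]; lra).
  destruct (head_integral_lub a ha) as [Hub _].
  assert (RInt (gamma_integrand a) e 1 <= head_integral a)
    by (apply Hub; exists e; split; [lra | auto]).
  assert (0 < RInt (gamma_integrand a) e x).
  { apply RInt_gt_0; [lra | intros; apply gamma_integrand_pos |].
    intros t Ht. apply gamma_integrand_continuous. lra. }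
  rewrite <- (gamma_integrand_chasles a e 1 x) in * by lra. lra.
Qed.

(* Since lower_gamma > 0, a positive value of P forces Gamma(a) > 0. *)
Lemma Gamma_fn_pos_of_P (a x : R) : 0 < a -> 0 < x -> 0 < P a x -> 0 < Gamma_fn a.
Proof.
  intros ha hx HP. pose proof (lower_gamma_pos a x ha hx). unfold P in HP.
  destruct (Rlt_le_dec 0 (Gamma_fn a)) as [| Hle]; auto.
  destruct Hle as [Hlt | Heq].
  - assert (/ Gamma_fn a < 0) by (apply Rinv_lt_0_compat; auto). unfold Rdiv in HP. nra.
  - rewrite Heq, Rdiv_0_r in HP. lra.
Qed.

Lemma P_sandwich (a u v : R) : 0 < a -> a < 1 -> 0 < Gamma_fn a -> 0 < u -> u <= v ->
  dP a v * (v - u) <= P a v - P a u <= dP a u * (v - u).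
Proof.
  intros ha ha1 hG hu huv.
  assert (B : gamma_integrand a v * (v - u) <= RInt (gamma_integrand a) u v
              <= gamma_integrand a u * (v - u)).
  { apply RInt_nonincreasing_bounds; auto.
    - apply gamma_integrand_integrable; lra.
    - intros. apply gamma_integrand_nonincreasing; lra. }
  rewrite <- lower_gamma_increment in B by lra.
  assert (0 < / Gamma_fn a) by (apply Rinv_0_lt_compat; auto).
  unfold P, dP, Rdiv. fold (gamma_integrand a u) (gamma_integrand a v).
  split; nra.
Qed.

Lemma dP_nonincreasing (a u v : R) : a < 1 -> 0 < Gamma_fn a -> 0 < u -> u <= v ->
  dP a v <= dP a u.
Proof.
  intros ha1 hG hu huv. unfold dP, Rdiv.
  fold (gamma_integrand a u) (gamma_integrand a v).
  apply Rmult_le_compat_r; [left; apply Rinv_0_lt_compat; auto |].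
  apply gamma_integrand_nonincreasing; lra.
Qed.

Theorem mainTheorem4 (a p xstar x0 : R) :
  0 < a -> a < 1 -> 0 < p -> p < 1 ->
  0 < xstar -> P a xstar = p ->
  0 < x0 -> x0 <= xstar ->
  (forall n, newton a p x0 n <= newton a p x0 (S n)) /\
  (forall n, newton a p x0 n <= xstar) /\
  Un_cv (newton a p x0) xstar.
Proof.
  intros ha ha1 hp _ hxs HP hx0 hx0s. subst p.
  assert (hG : 0 < Gamma_fn a) by (apply (Gamma_fn_pos_of_P a xstar); auto).
  assert (Hpos : forall x, x0 <= x <= xstar -> 0 < dP a x).
  { intros x Hx. unfold dP. fold (gamma_integrand a x).
    apply Rdiv_lt_0_compat; [apply gamma_integrand_pos | auto]. }
  assert (Hdec : forall x y, x0 <= x -> x <= y -> y <= xstar -> dP a y <= dP a x)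
    by (intros; apply dP_nonincreasing; lra).
  assert (Hsw : forall x, x0 <= x <= xstar ->
            dP a xstar * (xstar - x) <= P a xstar - P a x <= dP a x * (xstar - x))
    by (intros; apply P_sandwich; lra).
  assert (Hit : forall n, newton a (P a xstar) x0 (S n)
                = newton_step (P a) (dP a) xstar (newton a (P a xstar) x0 n))
    by reflexivity.
  repeat split.
  - intros n. apply (newton_iterates_nondecreasing (P a) (dP a) x0 xstar); auto.
  - intros n. apply (newton_iterates_bracket (P a) (dP a) x0 xstar); auto.
  - apply (newton_iterates_converge (P a) (dP a) x0 xstar); auto.
Qed.
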